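(* Let $f:A\to B$ be a homomorphism of commutative rings such that every ideal of $B$ is of the form $f(\mathfrak{a})B$ for some ideal $\mathfrak{a}\subseteq A$, and let $\sigma$ be a hereditary torsion theory on $A$-modules such that $A$ is totally $\sigma$-artinian. Then $B$ is totally $f(\sigma)$-artinian.
   Context: $\mathcal{L}(\sigma)$ is the Gabriel filter of $\sigma$. $f(\sigma)$ is the hereditary torsion theory on $B$-modules with Gabriel filter $\mathcal{L}(f(\sigma))=\{\mathfrak{b}\subseteq B: f^{-1}(\mathfrak{b})\in\mathcal{L}(\sigma)\}$ (a $B$-module is $f(\sigma)$-torsion iff it is $\sigma$-torsion as an $A$-module). A ring $R$ with hereditary torsion theory $\tau$ is totally $\tau$-artinian if for every descending chain of ideals $\mathfrak{a}_1\supseteq\mathfrak{a}_2\supseteq\cdots$ there exist $m$ and $\mathfrak{h}\in\mathcal{L}(\tau)$ with $\mathfrak{a}_m\mathfrak{h}\subseteq\mathfrak{a}_s$ for all $s\ge m$. *)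

From mathcomp Require Import all_boot all_order all_algebra.
Set Implicit Arguments. Unset Strict Implicit. Unset Printing Implicit Defensive.
Import GRing.Theory.
Local Open Scope ring_scope.

Definition is_ideal (R : comPzRingType) (I : R -> Prop) : Prop :=
  [/\ I 0, (forall x y, I x -> I y -> I (x + y)) & (forall r x, I x -> I (r * x))].

Definition subid (R : comPzRingType) (I J : R -> Prop) : Prop := forall x, I x -> J x.

Definition colon (R : comPzRingType) (I : R -> Prop) (x : R) : R -> Prop :=
  fun r => I (r * x).

Definition idealMul (R : comPzRingType) (I J : R -> Prop) : R -> Prop :=
  fun x => exists s : seq (R * R),
    (forall p, p \in s -> I p.1 /\ J p.2) /\ x = \sum_(p <- s) p.1 * p.2.

Definition extIdeal (A B : comPzRingType) (f : {rmorphism A -> B}) (I : A -> Prop)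
  : B -> Prop :=
  fun y => exists s : seq (A * B),
    (forall p, p \in s -> I p.1) /\ y = \sum_(p <- s) f p.1 * p.2.

(* A hereditary torsion theory on R-modules is determined by (and in bijection
   with) its Gabriel filter L; we represent the torsion theory by L
   (Stenström's axioms T1-T4 for a Gabriel topology). *)
Definition gabriel_filter (R : comPzRingType) (L : (R -> Prop) -> Prop) : Prop :=
  [/\ (forall a, L a -> is_ideal a),
      L (fun _ => True),
      (forall a b, L a -> is_ideal b -> subid a b -> L b),
      (forall a x, L a -> L (colon a x)) &
      (forall a b, L a -> is_ideal b -> (forall x, a x -> L (colon b x)) -> L b)].

(* Gabriel filter of f(sigma): { b ideal of B | f^{-1}(b) \in L(sigma) }. *)
Definition push_filter (A B : comPzRingType) (f : {rmorphism A -> B})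
  (L : (A -> Prop) -> Prop) : (B -> Prop) -> Prop :=
  fun b => is_ideal b /\ L (fun x => b (f x)).

Definition totally_artinian (R : comPzRingType) (L : (R -> Prop) -> Prop) : Prop :=
  forall a : nat -> (R -> Prop),
    (forall n, is_ideal (a n)) ->
    (forall n, subid (a n.+1) (a n)) ->
    exists m, exists h, L h /\
      forall s, (m <= s)%N -> subid (idealMul (a m) h) (a s).

From mathcomp Require Import all_boot all_order all_algebra.
Set Implicit Arguments. Unset Strict Implicit. Unset Printing Implicit Defensive.
Import GRing.Theory.
Local Open Scope ring_scope.

(* Let b_1 ⊇ b_2 ⊇ ... be a descending chain of ideals of B
   and put a_n := f^{-1}(b_n), a descending chain of ideals of A.  Total
   sigma-artinianity of A yields m and h in L(sigma) with a_m h ⊆ a_s for all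
   s >= m.  We take hB (the extension of h) as the witness in L(f(sigma)):
   its contraction contains h, so it lies in the Gabriel filter by upward
   closure.  Since every ideal of B is an extended ideal, b_m = a_m B
   (extension of the contraction), hence
       b_m (hB) = (a_m B)(hB) ⊆ (a_m h)B ⊆ b_s,
   the last inclusion because hB is the least ideal containing f(h) and
   a_m h ⊆ f^{-1}(b_s). *)

Lemma ideal_sum (R : comPzRingType) (I : R -> Prop) (T : eqType)
    (s : seq T) (F : T -> R) :
  is_ideal I -> (forall p, p \in s -> I (F p)) -> I (\sum_(p <- s) F p).
Proof.
move=> [I0 ID _]; elim: s => [|x s IH] Hs; first by rewrite big_nil.
rewrite big_cons; apply: ID; first by apply: Hs; rewrite mem_head.
by apply: IH => p ps; apply: Hs; rewrite inE ps orbT.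
Qed.

Lemma ideal_mulr (R : comPzRingType) (I : R -> Prop) (x r : R) :
  is_ideal I -> I x -> I (x * r).
Proof. by move=> [_ _ IM] Ix; rewrite mulrC; apply: IM. Qed.

Lemma idealMul_subl (R : comPzRingType) (I I' J : R -> Prop) :
  subid I I' -> subid (idealMul I J) (idealMul I' J).
Proof.
move=> sII' x [s [Hs ->]]; exists s; split=> // p ps.
by have [Ip Jp] := Hs p ps; split=> //; apply: sII'.
Qed.

Section ExtensionContraction.

Variables (A B : comPzRingType) (f : {rmorphism A -> B}).

Definition contraction (b : B -> Prop) : A -> Prop := fun x => b (f x).

Lemma contraction_ideal (b : B -> Prop) : is_ideal b -> is_ideal (contraction b).
Proof.
move=> [b0 bD bM]; split; rewrite /contraction.
- by rewrite rmorph0.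
- by move=> x y; rewrite rmorphD; apply: bD.
- by move=> r x; rewrite rmorphM; apply: bM.
Qed.

Lemma extIdeal_ideal (I : A -> Prop) : is_ideal (extIdeal f I).
Proof.
split.
- by exists [::]; split=> //; rewrite big_nil.
- move=> x y [s [Hs ->]] [t [Ht ->]]; exists (s ++ t); split; last by rewrite big_cat.
  by move=> p; rewrite mem_cat => /orP [/Hs|/Ht].
- move=> r x [s [Hs ->]]; exists [seq (p.1, r * p.2) | p <- s]; split.
  + by move=> p /mapP [q qs ->] /=; apply: Hs.
  + rewrite big_map mulr_sumr; apply: eq_bigr => p _ /=.
    by rewrite mulrCA.
Qed.

Lemma extIdeal_gen (I : A -> Prop) (x : A) (y : B) :
  I x -> extIdeal f I (f x * y).
Proof.
move=> Ix; exists [:: (x, y)]; split; last by rewrite big_seq1.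
by move=> p; rewrite mem_seq1 => /eqP ->.
Qed.

Lemma sub_contraction_extIdeal (I : A -> Prop) :
  subid I (contraction (extIdeal f I)).
Proof. by move=> x Ix; rewrite /contraction -[f x]mulr1; apply: extIdeal_gen. Qed.

Lemma extIdeal_least (I : A -> Prop) (b : B -> Prop) :
  is_ideal b -> subid I (contraction b) -> subid (extIdeal f I) b.
Proof.
move=> bI sIb y [s [Hs ->]]; apply: ideal_sum => // p ps.
by apply: ideal_mulr => //; apply: sIb; apply: Hs.
Qed.

Lemma extIdeal_sub (I J : A -> Prop) :
  subid I J -> subid (extIdeal f I) (extIdeal f J).
Proof.
move=> sIJ; apply: extIdeal_least; first exact: extIdeal_ideal.
by move=> x /sIJ; apply: sub_contraction_extIdeal.
Qed.

Lemma extended_sub_extIdeal_contraction (b : B -> Prop) (I : A -> Prop) :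
  (forall y, b y <-> extIdeal f I y) -> subid b (extIdeal f (contraction b)).
Proof.
move=> bE y /bE; apply: extIdeal_sub => x Ix.
by apply/bE; apply: sub_contraction_extIdeal.
Qed.

Lemma idealMul_extIdeal (I J : A -> Prop) :
  subid (idealMul (extIdeal f I) (extIdeal f J)) (extIdeal f (idealMul I J)).
Proof.
have eI := @extIdeal_ideal (idealMul I J).
move=> _ [s [Hs ->]]; apply: ideal_sum => // p ps.
have [[u [Hu ->]] [w [Hw ->]]] := Hs p ps.
rewrite mulr_suml; apply: ideal_sum => // q qu.
rewrite mulr_sumr; apply: ideal_sum => // r rw.
have -> : f q.1 * q.2 * (f r.1 * r.2) = f (q.1 * r.1) * (q.2 * r.2).
  by rewrite rmorphM mulrACA.
apply: extIdeal_gen; exists [:: (q.1, r.1)]; split; last by rewrite big_seq1.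
by move=> z; rewrite mem_seq1 => /eqP -> /=; split; [apply: Hu | apply: Hw].
Qed.

End ExtensionContraction.

Theorem mainTheorem9 (A B : comPzRingType) (f : {rmorphism A -> B})
  (L : (A -> Prop) -> Prop) :
  (forall b : B -> Prop, is_ideal b ->
     exists a : A -> Prop, is_ideal a /\ forall y, b y <-> extIdeal f a y) ->
  gabriel_filter L ->
  totally_artinian L ->
  totally_artinian (push_filter f L).
Proof.
move=> Hext [_ _ Lup _ _] HA b bI bD.
pose a n := contraction f (b n).
have aI n : is_ideal (a n) by apply: contraction_ideal.
have aD n : subid (a n.+1) (a n) by move=> x; apply: bD.
have [m [h [Lh Hmh]]] := HA a aI aD.
exists m, (extIdeal f h); split.
  split; first exact: extIdeal_ideal.
  apply: (Lup h) => //; first by apply/contraction_ideal/extIdeal_ideal.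
  exact: sub_contraction_extIdeal.
have [am [_ bmE]] := Hext (b m) (bI m).
move=> s ms y /(idealMul_subl (extended_sub_extIdeal_contraction bmE)).
move=> /idealMul_extIdeal; apply: extIdeal_least; first exact: bI.
exact: Hmh.
Qed.
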